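(* Let $G=(V,E)$ be a $k$-edge-connected graph ($k>0$) and $\phi^*>0$. Suppose every induced subgraph $G[S]$ with $|S|\ge 2$ that is $k/20$-edge-connected and $1/4$-dense in $G$ satisfies $\phi(G[S])<\phi^*$. Then for every nonempty $U\subseteq V$, $$\log_2|U|\ \ge\ \frac{3/10-\phi_G(U)}{2\phi^*}.$$
   Context: Graphs are finite, undirected, unweighted, loopless, possibly with parallel edges; $k$-edge-connected means every cut $(S,\overline S)$, $\emptyset\ne S\subsetneq V$, has at least $k$ edges. For a graph $H$ and $S\subseteq V(H)$: $\partial_H(S)$ is the number of edges leaving $S$, $d_H(S)$ the sum of $H$-degrees of vertices in $S$, $\phi_H(S)=\partial_H(S)/d_H(S)$, and $\phi(H)=\min_{\emptyset\ne S\subsetneq V(H)}\partial_H(S)/\min\{d_H(S),d_H(V(H)\setminus S)\}$. An induced subgraph $H$ of $G$ is $\lambda$-dense if $d_H(v)\ge\lambda\,d_G(v)$ for every vertex $v$ of $H$. *)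

From mathcomp Require Import all_boot.
From Stdlib Require Import Reals.
Set Implicit Arguments. Unset Strict Implicit. Unset Printing Implicit Defensive.

(* A finite loopless multigraph on vertex type V is given by an edge
   multiplicity function m : V -> V -> nat, required (in the theorem) to be
   symmetric with m v v = 0.  Edge (u,v) has m u v parallel copies. *)

Section Graph.
Variables (V : finType) (m : V -> V -> nat).

Definition cut_in (S T : {set V}) : nat :=
  \sum_(u in T) \sum_(v in S :\: T) m u v.

Definition deg_in (S : {set V}) (v : V) : nat := \sum_(u in S) m v u.

Definition vol_in (S T : {set V}) : nat := \sum_(v in T) deg_in S v.

Definition edge_connected_in (S : {set V}) (c : R) : Prop :=
  forall T : {set V}, T \subset S -> T != set0 -> T != S ->
    Rle c (INR (cut_in S T)).

Definition dense_in (S : {set V}) (lam : R) : Prop :=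
  forall v, v \in S -> Rle (lam * INR (deg_in setT v)) (INR (deg_in S v)).

Definition proper_subsets (S : {set V}) : seq {set V} :=
  enum [set T : {set V} | (T \subset S) && (T != set0) && (T != S)].

(* conductance phi(G[S]) = min over emptyset <> T proper subset of S of
   cut / min(vol T, vol (S\T)); defined as 0 when there is no such T *)
Definition phi_ind (S : {set V}) : R :=
  match [seq Rdiv (INR (cut_in S T))
                  (Rmin (INR (vol_in S T)) (INR (vol_in S (S :\: T))))
        | T <- proper_subsets S] with
  | [::] => 0%R
  | x :: s => foldr Rmin x s
  end.

Definition phi_set (U : {set V}) : R :=
  Rdiv (INR (cut_in setT U)) (INR (vol_in setT U)).

End Graph.

Definition log2 (x : R) : R := Rdiv (ln x) (ln 2).

From mathcomp Require Import all_boot zify.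
From Stdlib Require Import Reals Lra Lia Classical.
Set Implicit Arguments. Unset Strict Implicit. Unset Printing Implicit Defensive.

(* One proves by strong induction on |U| the stronger bound
     ∂(U) >= potential(|U|) d(U) + k/10,  potential(n) = 3/10 - 2 φ* log2 n.
   A singleton has ∂(U) = d(U) >= k.  Otherwise G[U] is split in two:
   - along a cut of fewer than k/20 edges, whose double is paid by one of the
     two slack terms k/10;
   - by removing a vertex v keeping less than a quarter of its degree in U,
     whose contribution d(v) - 2 d_U(v) > d(v)/2 exceeds 3/10 d(v);
   - if neither is possible, G[U] is k/20-edge-connected and 1/4-dense, so it
     has a cut of conductance below φ*; its side T with |T| <= |U|/2 gains
     2 φ* d(T) in the potential, which pays for twice the cut.
   Dividing the stronger bound by d(U) gives the theorem. *)

Lemma sum_setU (V : finType) (A B : {set V}) (F : V -> nat) :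
  [disjoint A & B] ->
  \sum_(i in A :|: B) F i = \sum_(i in A) F i + \sum_(i in B) F i.
Proof. by move=> dAB; rewrite -bigU //=; apply: eq_bigl => x; rewrite inE. Qed.

Lemma setD_partition (V : finType) (T U : {set V}) : T \subset U ->
  [/\ [disjoint T & U :\: T], T :|: (U :\: T) = U & #|T| + #|U :\: T| = #|U|].
Proof.
move=> sTU; split; first by rewrite disjoints_subset setCD subsetUr.
  by rewrite -{2}(setID U T) (setIidPr sTU).
by rewrite -(cardsID T U) (setIidPr sTU).
Qed.

Lemma setD_neq0 (V : finType) (T U : {set V}) : T \subset U -> T != U ->
  U :\: T != set0.
Proof. by move=> sTU; apply: contraNneq => /eqP; rewrite setD_eq0 eqEsubset sTU => ->. Qed.

Lemma Rlt_mul_of_div (c x p : R) : (0 < c)%R -> (c <= x)%R -> (c / x < p)%R ->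
  (c < p * x)%R.
Proof.
move=> c0 cx ratio; have x0 : (0 < x)%R by lra.
have := Rmult_lt_compat_r x _ _ x0 ratio.
by rewrite /Rdiv Rmult_assoc Rinv_l ?Rmult_1_r //; lra.
Qed.

Section Graph.
Variables (V : finType) (m : V -> V -> nat).
Hypothesis m_sym : forall u v, m u v = m v u.
Hypothesis m_loopless : forall v, m v v = 0%N.

Definition edges_between (A B : {set V}) : nat := \sum_(u in A) \sum_(v in B) m u v.

Lemma edges_betweenC (A B : {set V}) : edges_between A B = edges_between B A.
Proof.
rewrite /edges_between exchange_big.
by apply: eq_bigr => u _; apply: eq_bigr => v _.
Qed.

Lemma edges_betweenUr (A B C : {set V}) : [disjoint B & C] ->
  edges_between A (B :|: C) = edges_between A B + edges_between A C.
Proof. by move=> dBC; rewrite -big_split; apply: eq_bigr => u _; exact: sum_setU. Qed.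

Lemma cut_setU (A B : {set V}) : [disjoint A & B] ->
  cut_in m setT (A :|: B) + 2 * edges_between A B =
  cut_in m setT A + cut_in m setT B.
Proof.
move=> dAB; set O := ~: (A :|: B).
have dAB' x : x \in A -> x \in B -> False.
  by move=> xA xB; move: dAB => /disjoint_setI0/setP/(_ x); rewrite !inE xA xB.
have dBO : [disjoint B & O] by rewrite disjoints_subset /O setCK subsetUr.
have dAO : [disjoint A & O] by rewrite disjoints_subset /O setCK subsetUl.
have eA : setT :\: A = B :|: O.
  by apply/setP => x; rewrite /O !inE; case xA: (x \in A); case xB: (x \in B) => //;
    case: (dAB' x).
have eB : setT :\: B = A :|: O.
  by apply/setP => x; rewrite /O !inE; case xA: (x \in A); case xB: (x \in B) => //;
    case: (dAB' x).
have eU : setT :\: (A :|: B) = O by rewrite setTD.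
rewrite /cut_in eA eB eU sum_setU //.
rewrite -!/(edges_between _ _) !edges_betweenUr // (edges_betweenC B A).
lia.
Qed.

Lemma vol_in_setU (S A B : {set V}) : [disjoint A & B] ->
  vol_in m S (A :|: B) = vol_in m S A + vol_in m S B.
Proof. exact: sum_setU. Qed.

Lemma vol_in_leT (S A : {set V}) : vol_in m S A <= vol_in m setT A.
Proof.
apply: leq_sum => v _; rewrite /deg_in [X in _ <= X](big_setID S) setTI.
exact: leq_addr.
Qed.

Lemma cut_in_le_vol_in (S T : {set V}) : cut_in m S T <= vol_in m S T.
Proof.
apply: leq_sum => u _; rewrite /deg_in [X in _ <= X](big_setID (S :\: T)).
by rewrite (setIidPr (subsetDl S T)) leq_addr.
Qed.

Lemma cut_in_setDC (U T : {set V}) : T \subset U ->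
  cut_in m U (U :\: T) = cut_in m U T.
Proof.
by move=> sTU; rewrite /cut_in setDDr setDv set0U (setIidPr sTU); exact: edges_betweenC.
Qed.

Lemma cut_set1 v : cut_in m setT [set v] = deg_in m setT v.
Proof. by rewrite /cut_in big_set1 /deg_in [in RHS](big_setD1 v) ?inE // m_loopless. Qed.

Lemma edges_between_setD1 (U : {set V}) v : v \in U ->
  edges_between (U :\ v) [set v] = deg_in m U v.
Proof.
move=> vU; rewrite /deg_in [in RHS](big_setD1 v) // m_loopless.
by apply: eq_bigr => u _; rewrite big_set1 m_sym.
Qed.

Lemma connectivity_le_deg (c : R) v : (2 <= #|V|)%N ->
  edge_connected_in m setT c -> (c <= INR (deg_in m setT v))%R.
Proof.
move=> V2 conn; rewrite -cut_set1; apply: conn; first exact: subsetT.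
  by apply/set0Pn; exists v; rewrite inE.
by apply/eqP => v_all; move: V2; rewrite -cardsT -v_all cards1.
Qed.

Lemma phi_ind_lt_ratio (S T0 : {set V}) (p : R) :
  T0 \subset S -> T0 != set0 -> T0 != S -> (phi_ind m S < p)%R ->
  exists2 T : {set V}, [/\ T \subset S, T != set0 & T != S] &
    (INR (cut_in m S T) /
       Rmin (INR (vol_in m S T)) (INR (vol_in m S (S :\: T))) < p)%R.
Proof.
move=> sT0S T0n0 T0nS; rewrite /phi_ind.
have : T0 \in proper_subsets S by rewrite mem_enum inE sT0S T0n0 T0nS.
have proper T : T \in proper_subsets S -> [/\ T \subset S, T != set0 & T != S].
  by rewrite mem_enum inE => /andP[/andP[-> ->] ->].
case: (proper_subsets S) proper => [//|T1 s] proper _ /=.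
elim: s T1 proper => [|T2 s IH] T1 proper /=.
  by move=> ratio; exists T1 => //; apply: proper; rewrite mem_head.
rewrite /Rmin; case: Rle_dec => _ ratio.
  by exists T2 => //; apply: proper; rewrite !inE eqxx orbT.
apply: (IH T1) => // T; rewrite inE => /orP[/eqP-> | Ts]; apply: proper.
  by rewrite mem_head.
by rewrite !inE Ts !orbT.
Qed.

Lemma phi_ind_lt_cut (S : {set V}) (c p : R) : (0 < c)%R -> (2 <= #|S|)%N ->
  edge_connected_in m S c -> (phi_ind m S < p)%R ->
  exists2 T : {set V}, [/\ T \subset S, T != set0 & S :\: T != set0] &
    (INR (cut_in m S T)
       < p * Rmin (INR (vol_in m S T)) (INR (vol_in m S (S :\: T))))%R.
Proof.
move=> c_gt0 S2 conn phiS; have [v vS] : exists v, v \in S.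
  by apply/set0Pn; rewrite -card_gt0; lia.
have v_proper : [set v] != S by apply/eqP => Sv; move: S2; rewrite -Sv cards1.
have v0 : [set v] != set0 by apply/set0Pn; exists v; rewrite inE.
have vS' : [set v] \subset S by rewrite sub1set.
have [T [sTS T0 TS] ratio] := phi_ind_lt_ratio vS' v0 v_proper phiS.
exists T; first by split; last exact: setD_neq0.
apply: Rlt_mul_of_div ratio; first exact/(Rlt_le_trans _ _ _ c_gt0)/conn.
apply: Rmin_glb; apply/le_INR/leP; first exact: cut_in_le_vol_in.
by rewrite -(cut_in_setDC sTS); apply: cut_in_le_vol_in.
Qed.

End Graph.

Lemma ln2_gt0 : (0 < ln 2)%R.
Proof. have := ln_lt_2; lra. Qed.

Lemma log2_1 : log2 (INR 1) = 0%R.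
Proof. by rewrite /log2 /= ln_1 /Rdiv Rmult_0_l. Qed.

Lemma log2_le (a b : nat) : (1 <= a)%N -> (a <= b)%N ->
  (log2 (INR a) <= log2 (INR b))%R.
Proof.
move=> a1 ab; rewrite /log2 /Rdiv; apply: Rmult_le_compat_r.
  by apply/Rlt_le/Rinv_0_lt_compat/ln2_gt0.
have a_gt0 : (0 < INR a)%R by apply: lt_0_INR; apply/ltP.
case: (Rle_lt_or_eq_dec _ _ (le_INR a b (elimT leP ab))) => [lt_ab | ->].
  by apply/Rlt_le/ln_increasing.
exact: Rle_refl.
Qed.

Lemma log2_double (a : nat) : (1 <= a)%N -> log2 (INR (2 * a)) = (log2 (INR a) + 1)%R.
Proof.
move=> a1; have a_gt0 : (0 < INR a)%R by apply: lt_0_INR; apply/ltP.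
have ln2_neq0 := Rgt_not_eq _ _ ln2_gt0.
rewrite /log2 mult_INR (_ : INR 2 = 2%R) ?ln_mult //; last by rewrite /= ; lra.
by field.
Qed.

Definition potential (p : R) (n : nat) : R := (3/10 - 2 * p * log2 (INR n))%R.

Lemma potential1 p : potential p 1 = (3/10)%R.
Proof. rewrite /potential log2_1; lra. Qed.

Lemma potential_le p (a b : nat) : (0 <= p)%R -> (1 <= a)%N -> (a <= b)%N ->
  (potential p b <= potential p a)%R.
Proof. by move=> p0 a1 ab; have := log2_le a1 ab; rewrite /potential; nra. Qed.

Lemma potential_le_half p (a b : nat) : (0 <= p)%R -> (1 <= a)%N -> (2 * a <= b)%N ->
  (potential p b + 2 * p <= potential p a)%R.
Proof.
move=> p0 a1 ab; have a2 : (1 <= 2 * a)%N by lia.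
have := log2_le a2 ab.
by rewrite log2_double // /potential; nra.
Qed.

Section Expansion.
Variables (V : finType) (m : V -> V -> nat) (k : nat) (p : R).
Hypothesis m_sym : forall u v, m u v = m v u.
Hypothesis m_loopless : forall v, m v v = 0%N.
Hypothesis p_gt0 : (0 < p)%R.
Hypothesis k_le_deg : forall v, (INR k <= INR (deg_in m setT v))%R.

Definition large_boundary (U : {set V}) : Prop :=
  (potential p #|U| * INR (vol_in m setT U) + INR k / 10
     <= INR (cut_in m setT U))%R.

Lemma large_boundary_set1 v : large_boundary [set v].
Proof.
rewrite /large_boundary cards1 potential1 /vol_in big_set1 cut_set1 //.
have := k_le_deg v; have := pos_INR k; lra.
Qed.

Lemma large_boundary_setU (A B : {set V}) : [disjoint A & B] ->
  large_boundary A -> large_boundary B ->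
  (2 * INR (edges_between m A B) <= INR k / 10
     + (potential p #|A| - potential p #|A :|: B|) * INR (vol_in m setT A)
     + (potential p #|B| - potential p #|A :|: B|) * INR (vol_in m setT B))%R ->
  large_boundary (A :|: B).
Proof.
move=> dAB LA LB slack; rewrite /large_boundary vol_in_setU // plus_INR.
move/(f_equal INR): (cut_setU m_sym dAB); rewrite !plus_INR /=.
move: LA LB slack; rewrite /large_boundary; lra.
Qed.

Lemma large_boundary_sparse_split (U T : {set V}) :
  T \subset U -> T != set0 -> U :\: T != set0 ->
  large_boundary T -> large_boundary (U :\: T) ->
  (INR (cut_in m U T) < INR k / 20)%R -> large_boundary U.
Proof.
move=> sTU T0 D0 LT LD sparse; have [dTD eU cardU] := setD_partition sTU.
rewrite -eU; apply: large_boundary_setU => //; rewrite eU.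
have potT : (potential p #|U| <= potential p #|T|)%R.
  by apply: potential_le; [lra | rewrite card_gt0 | lia].
have potD : (potential p #|U| <= potential p #|U :\: T|)%R.
  by apply: potential_le; [lra | rewrite card_gt0 | lia].
have := pos_INR (vol_in m setT T); have := pos_INR (vol_in m setT (U :\: T)).
change (INR (edges_between m T (U :\: T)) < INR k / 20)%R in sparse; nra.
Qed.

Lemma large_boundary_conductance_split (U T : {set V}) :
  T \subset U -> T != set0 -> U :\: T != set0 ->
  large_boundary T -> large_boundary (U :\: T) ->
  (INR (cut_in m U T)
     < p * Rmin (INR (vol_in m U T)) (INR (vol_in m U (U :\: T))))%R ->
  large_boundary U.
Proof.
wlog small : T / (#|T| <= #|U :\: T|)%N.
  move=> gen sTU T0 D0 LT LD cond; case: (leqP #|T| #|U :\: T|) => [|big].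
    by move=> small; apply: (gen T).
  have eT : U :\: (U :\: T) = T by rewrite setDDr setDv set0U (setIidPr sTU).
  apply: (gen (U :\: T)); rewrite ?eT ?subsetDl ?cut_in_setDC 1?Rmin_comm //.
  exact: ltnW.
move=> sTU T0 D0 LT LD cond; have [dTD eU cardU] := setD_partition sTU.
rewrite -eU; apply: large_boundary_setU => //; rewrite eU.
have potT : (potential p #|U| + 2 * p <= potential p #|T|)%R.
  by apply: potential_le_half; [lra | rewrite card_gt0 | lia].
have potD : (potential p #|U| <= potential p #|U :\: T|)%R.
  by apply: potential_le; [lra | rewrite card_gt0 | lia].
have volT : (Rmin (INR (vol_in m U T)) (INR (vol_in m U (U :\: T)))
               <= INR (vol_in m setT T))%R.
  exact/(Rle_trans _ _ _ (Rmin_l _ _))/le_INR/leP/vol_in_leT.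
have := pos_INR (vol_in m setT T); have := pos_INR (vol_in m setT (U :\: T)).
have := pos_INR k.
change (INR (edges_between m T (U :\: T)) < p * Rmin (INR (vol_in m U T))
          (INR (vol_in m U (U :\: T))))%R in cond.
nra.
Qed.

Lemma large_boundary_light_vertex (U : {set V}) v : v \in U -> U :\ v != set0 ->
  large_boundary (U :\ v) -> (4 * deg_in m U v < deg_in m setT v)%N ->
  large_boundary U.
Proof.
move=> vU D0 LD light; have dvD : [disjoint [set v] & U :\ v] by rewrite disjoints1 setD11.
have := f_equal INR (cut_setU m_sym dvD).
rewrite (edges_betweenC m_sym) edges_between_setD1 // setD1K // cut_set1 //.
rewrite !plus_INR /= => cutU.
have {}light := lt_INR _ _ (elimT ltP light); rewrite mult_INR /= in light.
have volU : vol_in m setT U = (deg_in m setT v + vol_in m setT (U :\ v))%N.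
  by rewrite -{1}(setD1K vU) vol_in_setU // /vol_in big_set1.
move: LD; rewrite /large_boundary volU plus_INR.
have potD : (potential p #|U| <= potential p #|U :\ v|)%R.
  apply: potential_le; [lra | by rewrite card_gt0 | ].
  exact/ltnW/proper_card/properD1.
have pot1 : (potential p #|U| <= 3/10)%R.
  rewrite -(potential1 p); apply: potential_le => //; first lra.
  by rewrite card_gt0; apply/set0Pn; exists v.
have := pos_INR (vol_in m setT (U :\ v)); have := pos_INR (deg_in m setT v).
nra.
Qed.

Hypothesis k_gt0 : (0 < k)%N.
Hypothesis conductance_small : forall S : {set V}, (2 <= #|S|)%N ->
  edge_connected_in m S (INR k / 20) -> dense_in m S (1 / 4) ->
  (phi_ind m S < p)%R.

Lemma large_boundary_all (U : {set V}) : U != set0 -> large_boundary U.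
Proof.
have [n] := ubnP #|U|; elim: n U => // n IH U /ltnSE leUn U0.
have [/cards1P[v ->] | U1] := boolP (#|U| == 1%N); first exact: large_boundary_set1.
have U2 : (2 <= #|U|)%N by move: U0 U1; rewrite -card_gt0; lia.
have IHU (W : {set V}) : W != set0 -> (#|W| < #|U|)%N -> large_boundary W.
  by move=> W0 ltWU; apply: IH => //; lia.
have IHsplit (T : {set V}) : T \subset U -> T != set0 -> U :\: T != set0 ->
    large_boundary T /\ large_boundary (U :\: T).
  move=> sTU T0 D0; have [_ _ cardU] := setD_partition sTU.
  by move: T0 D0; rewrite -!card_gt0 => T0 D0; split; apply: IHU; rewrite -?card_gt0; lia.
case: (classic (exists2 T : {set V}, [/\ T \subset U, T != set0 & U :\: T != set0] &
                  (INR (cut_in m U T) < INR k / 20)%R)) => [[T [sTU T0 D0] sparse] | not_sparse].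
  have [LT LD] := IHsplit T sTU T0 D0.
  exact: (large_boundary_sparse_split sTU T0 D0 LT LD sparse).
case: (classic (exists2 v, v \in U & (4 * deg_in m U v < deg_in m setT v)%N))
  => [[v vU light] | not_light].
  have D0 : U :\ v != set0 by rewrite -card_gt0; move: U2; rewrite (cardsD1 v U) vU; lia.
  apply: (large_boundary_light_vertex vU D0 _ light); apply: IHU D0 _.
  exact/proper_card/properD1.
have conn : edge_connected_in m U (INR k / 20).
  move=> T sTU T0 TU; apply: Rnot_lt_le => sparse; apply: not_sparse.
  by exists T => //; split => //; apply: setD_neq0.
have dense : dense_in m U (1 / 4).
  move=> v vU; apply: Rnot_lt_le => lt; apply: not_light; exists v => //.
  by apply/ltP/INR_lt; rewrite mult_INR /=; lra.
have k20 : (0 < INR k / 20)%R by have := lt_0_INR k (elimT ltP k_gt0); lra.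
have [T [sTU T0 D0] cond] := phi_ind_lt_cut m_sym k20 U2 conn (conductance_small U2 conn dense).
have [LT LD] := IHsplit T sTU T0 D0.
exact: (large_boundary_conductance_split sTU T0 D0 LT LD cond).
Qed.

Lemma large_boundary_log2 (U : {set V}) : U != set0 -> large_boundary U ->
  ((3 / 10 - phi_set m U) / (2 * p) <= log2 (INR #|U|))%R.
Proof.
move=> U0; have [v vU] := set0Pn _ U0.
have vol_gt0 : (0 < INR (vol_in m setT U))%R.
  have k0 : (0 < INR k)%R by apply/lt_0_INR/ltP.
  apply: (Rlt_le_trans _ _ _ (Rlt_le_trans _ _ _ k0 (k_le_deg v))).
  by apply/le_INR/leP; rewrite /vol_in (big_setD1 v) //= leq_addr.
rewrite /large_boundary /phi_set /potential.
set c := INR (cut_in _ _ _); set vol := INR (vol_in _ _ _) in vol_gt0 *.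
set L := log2 _ => LU.
have ratio : (3 / 10 - c / vol <= 2 * p * L)%R.
  suff : (3 / 10 - 2 * p * L <= c / vol)%R by lra.
  apply: (Rmult_le_reg_r vol) => //.
  have -> : (c / vol * vol = c)%R by field; lra.
  have := pos_INR k; lra.
apply: (Rmult_le_reg_r (2 * p)); first lra.
have -> : ((3 / 10 - c / vol) / (2 * p) * (2 * p) = 3 / 10 - c / vol)%R.
  by field; lra.
lra.
Qed.

End Expansion.

Theorem mainTheorem10 (V : finType) (m : V -> V -> nat) (k : nat) (phistar : R) :
  (forall u v, m u v = m v u) ->
  (forall v, m v v = 0%N) ->
  (2 <= #|V|)%N ->
  (0 < k)%N ->
  edge_connected_in m setT (INR k) ->
  Rlt 0 phistar ->
  (forall S : {set V}, (2 <= #|S|)%N ->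
     edge_connected_in m S (Rdiv (INR k) 20) ->
     dense_in m S (Rdiv 1 4) ->
     Rlt (phi_ind m S) phistar) ->
  forall U : {set V}, U != set0 ->
    Rle (Rdiv (Rminus (Rdiv 3 10) (phi_set m U)) (Rmult 2 phistar))
        (log2 (INR #|U|)).
Proof.
move=> m_sym m_loopless V2 k_gt0 conn phistar_gt0 small U U0.
have k_le_deg v : (INR k <= INR (deg_in m setT v))%R.
  exact: (connectivity_le_deg m_loopless v V2 conn).
apply: large_boundary_log2 => //.
exact: large_boundary_all.
Qed.
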